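(* Let $\mathcal{C}$ and $\mathcal{D}$ be fusion categories over an algebraically closed field $k$ of characteristic $0$. The assignment \[ (\mathcal{E},\,\mathcal{F},\,G)\ \mapsto\ \mathcal{S}(\mathcal{E},\mathcal{F},G):=\mathcal{E}\boxtimes_G\mathcal{F}=\bigoplus_{g\in G}\mathcal{E}_g\boxtimes\mathcal{F}_g\ \subset\ \mathcal{C}\boxtimes\mathcal{D} \] is a bijection between the set of subcategory data for $\mathcal{C}\boxtimes\mathcal{D}$ and the set of fusion subcategories of $\mathcal{C}\boxtimes\mathcal{D}$.
   Context: A fusion category is a $k$-linear semisimple rigid tensor category with finitely many isomorphism classes of simple objects, finite-dimensional Hom-spaces and simple unit object; a fusion subcategory means a full tensor subcategory; $\boxtimes$ is Deligne's tensor product. For a fusion category $\mathcal{C}$, let $\mathcal{O}(\mathcal{C})$ be the set of isomorphism classes of simple objects. A grading of $\mathcal{C}$ by a finite group $G$ is a map $\deg:\mathcal{O}(\mathcal{C})\to G$ such that whenever a simple $Z$ is contained in $X\otimes Y$ ($X,Y$ simple) one has $\deg Z=\deg X\cdot\deg Y$; it is identified with the decomposition $\mathcal{C}=\bigoplus_{g\in G}\mathcal{C}_g$, where $\mathcal{C}_g$ is the full additive subcategory generated by simples of degree $g$. The grading is faithful if $\deg$ is surjective. A subcategory datum for $\mathcal{C}\boxtimes\mathcal{D}$ consists of fusion subcategories $\mathcal{E}\subset\mathcal{C}$, $\mathcal{F}\subset\mathcal{D}$, a finite group $G$, and fixed faithful gradings of $\mathcal{E}$ and $\mathcal{F}$ by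 $G$. Two data $(\mathcal{E},\mathcal{F},G)$ and $(\mathcal{E},\mathcal{F},G')$ are identified if there is a group isomorphism $\alpha:G\to G'$ with $\mathcal{E}_g=\mathcal{E}'_{\alpha(g)}$ and $\mathcal{F}_g=\mathcal{F}'_{\alpha(g)}$ for all $g$ (where primes denote the components of the gradings by $G'$). *)

(* A fusion category is modelled through the data that all
   notions in the statement depend on: its set of isomorphism classes of simple
   objects O(C) (a finType), the unit, duality, and the fusion multiplicities
   N_{ij}^k = dim Hom(k, i (x) j). *)
From HB Require Import structures.
From mathcomp Require Import all_boot all_fingroup.
Set Implicit Arguments. Unset Strict Implicit. Unset Printing Implicit Defensive.

Record fusion_rules (I : finType) := FusionRules {
  f_one : I;
  f_dual : I -> I;
  f_N : I -> I -> I -> nat;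
  f_unitl : forall j k, f_N f_one j k = (j == k) :> nat;
  f_unitr : forall i k, f_N i f_one k = (i == k) :> nat;
  f_assoc : forall i j k l,
    \sum_(m : I) f_N i j m * f_N m k l = \sum_(m : I) f_N j k m * f_N i m l;
  f_dualK : forall i, f_dual (f_dual i) = i;
  f_N_one : forall i j, f_N i j f_one = (j == f_dual i) :> nat;
  f_frobl : forall i j k, f_N i j k = f_N (f_dual i) k j;
  f_frobr : forall i j k, f_N i j k = f_N k (f_dual j) i
}.

(* A fusion subcategory (full tensor subcategory, hence containing the unit and
   closed under tensor products and duals), identified with its set of simples. *)
Definition is_fusion_subcat (I : finType) (one : I) (dual : I -> I)
    (N : I -> I -> I -> nat) (S : {set I}) : Prop :=
  [/\ one \in S,
      (forall i, i \in S -> dual i \in S) &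
      (forall i j k, i \in S -> j \in S -> 0 < N i j k -> k \in S)].

Definition fusion_subcat (I : finType) (C : fusion_rules I) (S : {set I}) :=
  is_fusion_subcat (f_one C) (@f_dual _ C) (@f_N _ C) S.

(* Deligne product: simples of C \boxtimes D are pairs, fusion rules multiply. *)
Definition dp_one (I J : finType) (C : fusion_rules I) (D : fusion_rules J) : I * J :=
  (f_one C, f_one D).
Definition dp_dual (I J : finType) (C : fusion_rules I) (D : fusion_rules J)
  (p : I * J) : I * J := (f_dual C p.1, f_dual D p.2).
Definition dp_N (I J : finType) (C : fusion_rules I) (D : fusion_rules J)
  (p q r : I * J) : nat := f_N C p.1 q.1 r.1 * f_N D p.2 q.2 r.2.

Definition deligne_subcat (I J : finType) (C : fusion_rules I) (D : fusion_rules J)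
  (S : {set I * J}) : Prop :=
  is_fusion_subcat (dp_one C D) (dp_dual C D) (dp_N C D) S.

(* A G-grading of the fusion subcategory E (deg only matters on E). *)
Definition is_grading (I : finType) (C : fusion_rules I) (E : {set I})
    (gT : finGroupType) (deg : I -> gT) : Prop :=
  forall x y z, x \in E -> y \in E -> 0 < f_N C x y z -> deg z = (deg x * deg y)%g.

Definition faithful_grading (I : finType) (C : fusion_rules I) (E : {set I})
    (gT : finGroupType) (deg : I -> gT) : Prop :=
  is_grading C E deg /\ deg @: E = [set: gT].

Definition subcat_datum (I J : finType) (C : fusion_rules I) (D : fusion_rules J)
    (E : {set I}) (F : {set J}) (gT : finGroupType) (dE : I -> gT) (dF : J -> gT)
    : Prop :=
  [/\ fusion_subcat C E, fusion_subcat D F,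
      faithful_grading C E dE & faithful_grading D F dF].

Definition datum_subcat (I J : finType) (E : {set I}) (F : {set J})
    (gT : finGroupType) (dE : I -> gT) (dF : J -> gT) : {set I * J} :=
  [set p : I * J | [&& p.1 \in E, p.2 \in F & dE p.1 == dF p.2]].

Definition datum_equiv (I J : finType)
    (E : {set I}) (F : {set J}) (gT : finGroupType) (dE : I -> gT) (dF : J -> gT)
    (E' : {set I}) (F' : {set J}) (gT' : finGroupType) (dE' : I -> gT') (dF' : J -> gT')
    : Prop :=
  E = E' /\ F = F' /\
  exists alpha : gT -> gT',
    [/\ bijective alpha, {morph alpha : x y / (x * y)%g},
        {in E, forall x, dE' x = alpha (dE x)} &
        {in F, forall y, dF' y = alpha (dF y)}].

(* For a fusion subcategory S of C [x] D let E and F be its two projections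
   and, for x in E, let S_x = {y | (x, y) in S} be the fibre over x.  Two
   fibres that meet coincide, and the fusion product of sets of simples
   satisfies S_u S_x = S_z whenever z occurs in u (x) x; hence the fibres form
   a group G, x |-> S_x grades E, y |-> (the fibre containing y) grades F, and
   S consists of the pairs of equal degree.  G is realised as a finite group
   through its right regular action on sets of simples of D.  Conversely, E and
   F are the projections of E [x]_G F, and two simples of E have the same
   degree iff they share a partner in F, which determines the grading up to a
   unique isomorphism of groups. *)

From mathcomp Require Import all_boot all_fingroup.
Set Implicit Arguments. Unset Strict Implicit. Unset Printing Implicit Defensive.

Lemma sum_nat_gt0_exists (T : finType) (F : T -> nat) :
  0 < \sum_i F i -> exists i, 0 < F i.
Proof. by rewrite lt0n sum_nat_eq0 => /forallPn[i Fi]; exists i; rewrite lt0n. Qed.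

Lemma imsetT_witness (T U : finType) (f : T -> U) (A : {set T}) u :
  f @: A = [set: U] -> exists2 x, x \in A & f x = u.
Proof.
move=> fA; have /imsetP[x xA ->] : u \in f @: A by rewrite fA inE.
by exists x.
Qed.

Section FusionRules.
Variables (I : finType) (C : fusion_rules I).
Local Notation N := (f_N C).
Local Notation d := (f_dual C).
Local Notation one := (f_one C).

Lemma f_N_unitl j : N one j j = 1. Proof. by rewrite f_unitl eqxx. Qed.
Lemma f_N_unitr j : N j one j = 1. Proof. by rewrite f_unitr eqxx. Qed.
Lemma f_N_dual i : N i (d i) one = 1. Proof. by rewrite f_N_one eqxx. Qed.

(* [i] occurs in [(i (x) j) (x) j^*] because [one] occurs in [j (x) j^*]. *)
Lemma f_constituent_dual i j : exists k, 0 < N i j k /\ 0 < N k (d j) i.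
Proof.
have : 0 < \sum_k N i j k * N k (d j) i.
  by rewrite f_assoc (bigD1 one) //= f_N_dual f_N_unitr leq_addr.
by case/sum_nat_gt0_exists=> k; rewrite muln_gt0 => /andP[]; exists k.
Qed.

Lemma f_constituent i j : exists k, 0 < N i j k.
Proof. by have [k [ijk _]] := f_constituent_dual i j; exists k. Qed.

Lemma f_constituent_reassoc i j j' k l : 0 < N i j k -> 0 < N k j' l ->
  exists m, 0 < N j j' m /\ 0 < N i m l.
Proof.
move=> ijk kj'l; have : 0 < \sum_m N i j m * N m j' l.
  by rewrite (bigD1 k) //= ltn_addr // muln_gt0 ijk.
by rewrite f_assoc => /sum_nat_gt0_exists[m]; rewrite muln_gt0 => /andP[]; exists m.
Qed.

Definition fusion_prod (X Y : {set I}) : {set I} :=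
  [set k | [exists i in X, exists j in Y, 0 < N i j k]].

Variables (E : {set I}) (gT : finGroupType) (deg : I -> gT).
Hypotheses (subE : fusion_subcat C E) (gradE : is_grading C E deg).

Lemma grading_unit : deg one = 1%g.
Proof.
case: subE => E1 _ _; have := @gradE _ _ one E1 E1; rewrite f_N_unitl => /(_ isT).
by move/esym/(canRL (mulKg _)); rewrite mulVg.
Qed.

Lemma grading_dual i : i \in E -> deg (d i) = (deg i)^-1%g.
Proof.
move=> iE; have diE : d i \in E by case: subE => _ Ed _; apply: Ed.
have := @gradE _ _ one iE diE; rewrite f_N_dual grading_unit => /(_ isT) /esym.
by move/eqP; rewrite -eq_invg_mul => /eqP <-.
Qed.

Lemma grading_factor (gT' : finGroupType) (deg' : I -> gT') :
    deg @: E = [set: gT] -> is_grading C E deg' ->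
    {in E &, forall i j, deg i = deg j -> deg' i = deg' j} ->
  exists2 alpha : gT -> gT', {morph alpha : g h / g * h}%g
                           & {in E, forall i, deg' i = alpha (deg i)}.
Proof.
move=> degT gradE' deg_fibre.
pose alpha g := if [pick i in E | deg i == g] is Some i then deg' i else 1%g.
have alphaE : {in E, forall i, deg' i = alpha (deg i)}.
  move=> i iE; rewrite /alpha; case: pickP => [j /andP[jE /eqP]|/(_ i)].
    by move/(deg_fibre _ _ jE iE).
  by rewrite iE eqxx.
exists alpha => // g h; case: subE => _ _ Em.
have [i iE <-] := imsetT_witness g degT; have [j jE <-] := imsetT_witness h degT.
have [k ijk] := f_constituent i j.
by rewrite -(gradE iE jE ijk) -!alphaE ?(Em _ _ _ iE jE ijk) // (gradE' _ _ _ iE jE ijk).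
Qed.
End FusionRules.

Lemma grading_iso (I : finType) (C : fusion_rules I) (E : {set I})
    (gT gT' : finGroupType) (deg : I -> gT) (deg' : I -> gT') :
    fusion_subcat C E -> faithful_grading C E deg -> faithful_grading C E deg' ->
    {in E &, forall i j, deg i = deg j <-> deg' i = deg' j} ->
  exists alpha : gT -> gT', [/\ bijective alpha, {morph alpha : g h / g * h}%g
                              & {in E, forall i, deg' i = alpha (deg i)}].
Proof.
move=> subE [gradE degT] [gradE' degT'] same_fibres.
have [alpha alphaM alphaE] := grading_factor subE gradE degT gradE'
  (fun i j iE jE => (same_fibres i j iE jE).1).
have [beta _ betaE] := grading_factor subE gradE' degT' gradE
  (fun i j iE jE => (same_fibres i j iE jE).2).
exists alpha; split=> //; exists beta => g.
  by have [i iE <-] := imsetT_witness g degT; rewrite -alphaE // -betaE.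
by have [i iE <-] := imsetT_witness g degT'; rewrite -betaE // -alphaE.
Qed.

Section CayleyEmbedding.
Variables (T : finType) (K : {set T}) (mul : T -> T -> T) (e : T).

Definition group_law_on : Prop :=
  [/\ e \in K, {in K &, forall X Y, mul X Y \in K},
      {in K & &, forall X Y Z, mul X (mul Y Z) = mul (mul X Y) Z},
      {in K, forall X, mul e X = X /\ mul X e = X}
    & {in K, forall X, exists2 X', X' \in K & mul X X' = e}].

Hypothesis lawK : group_law_on.

Let unitK : e \in K. Proof. by case: lawK. Qed.
Let mulK : {in K &, forall X Y, mul X Y \in K}. Proof. by case: lawK. Qed.
Let mulA : {in K & &, forall X Y Z, mul X (mul Y Z) = mul (mul X Y) Z}.
Proof. by case: lawK. Qed.
Let mul1X : {in K, forall X, mul e X = X}. Proof. by case: lawK => _ _ _ h _ X /h[]. Qed.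
Let mulX1 : {in K, forall X, mul X e = X}. Proof. by case: lawK => _ _ _ h _ X /h[]. Qed.
Let mulV : {in K, forall X, exists2 X', X' \in K & mul X X' = e}.
Proof. by case: lawK. Qed.

Definition cayley_fun X Y := if (X \in K) && (Y \in K) then mul Y X else Y.

Lemma cayley_fun_inj X : injective (cayley_fun X).
Proof.
rewrite /cayley_fun; case: (boolP (X \in K)) => [XK|_] Y1 Y2 //=.
have [X' X'K XX'] := mulV XK.
case Y1K: (Y1 \in K); case Y2K: (Y2 \in K) => // eqY.
- by rewrite -[Y1]mulX1 // -[Y2]mulX1 // -XX' !mulA // eqY.
- by move: (mulK Y1K XK); rewrite eqY Y2K.
- by move: (mulK Y2K XK); rewrite -eqY Y1K.
Qed.

Definition cayley X : {perm T} := perm (@cayley_fun_inj X).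

Lemma cayleyE X Y : X \in K -> Y \in K -> cayley X Y = mul Y X.
Proof. by move=> XK YK; rewrite permE /cayley_fun XK YK. Qed.

Lemma cayley_out X Y : Y \notin K -> cayley X Y = Y.
Proof. by move/negbTE=> YK; rewrite permE /cayley_fun YK andbF. Qed.

Lemma cayleyM : {in K &, {morph cayley : X Y / mul X Y >-> (X * Y)%g}}.
Proof.
move=> X Y XK YK; apply/permP => Z; rewrite permM.
have [ZK|ZK] := boolP (Z \in K); last by rewrite !cayley_out.
by rewrite !cayleyE ?mulK ?mulA.
Qed.

Lemma cayley1 : cayley e = 1%g.
Proof.
apply/permP => Z; rewrite perm1.
by have [ZK|ZK] := boolP (Z \in K); [rewrite cayleyE ?mulX1 | rewrite cayley_out].
Qed.

Lemma cayley_inj : {in K &, injective cayley}.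
Proof.
by move=> X Y XK YK /permP/(_ e); rewrite !cayleyE // !mul1X.
Qed.

Lemma cayley_group_set : group_set (cayley @: K).
Proof.
apply/group_setP; split; first by rewrite -cayley1 imset_f.
move=> _ _ /imsetP[X XK ->] /imsetP[Y YK ->].
by rewrite -cayleyM // imset_f ?mulK.
Qed.

End CayleyEmbedding.

Section PairSets.
Variables (I J : finType) (S : {set I * J}).

Lemma mem_fst x : reflect (exists y, (x, y) \in S) (x \in [set p.1 | p in S]).
Proof.
apply: (iffP imsetP) => [[[x' y] xyS ->]|[y xyS]]; first by exists y.
by exists (x, y).
Qed.

Lemma mem_snd y : reflect (exists x, (x, y) \in S) (y \in [set p.2 | p in S]).
Proof.
apply: (iffP imsetP) => [[[x y'] xyS ->]|[x xyS]]; first by exists x.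
by exists (x, y).
Qed.

End PairSets.

Section SubcategoryOfDatum.
Variables (I J : finType) (C : fusion_rules I) (D : fusion_rules J).
Variables (E : {set I}) (F : {set J}) (gT : finGroupType) (dE : I -> gT) (dF : J -> gT).
Local Notation S := (datum_subcat E F dE dF).

Lemma datum_subcat_fusion :
  subcat_datum C D E F dE dF -> deligne_subcat C D S.
Proof.
case=> subE subF [gradE _] [gradF _].
have [E1 Ed Em] := subE; have [F1 Fd Fm] := subF.
split.
- by rewrite inE /dp_one /= E1 F1 (grading_unit subE gradE) (grading_unit subF gradF) eqxx.
- move=> [x y]; rewrite !inE /dp_dual /= => /and3P[xE yF /eqP exy].
  by rewrite Ed // Fd // (grading_dual subE gradE) // (grading_dual subF gradF) // exy eqxx.
- move=> [x y] [x' y'] [z w]; rewrite !inE /dp_N /= muln_gt0.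
  move=> /and3P[xE yF /eqP exy] /and3P[x'E y'F /eqP ex'y'] /andP[xx'z yy'w].
  by rewrite (Em _ _ _ xE x'E xx'z) (Fm _ _ _ yF y'F yy'w) (gradE _ _ _ xE x'E xx'z)
    (gradF _ _ _ yF y'F yy'w) exy ex'y' eqxx.
Qed.

Lemma datum_subcat_fst : dF @: F = [set: gT] -> [set p.1 | p in S] = E.
Proof.
move=> dFT; apply/setP => x; apply/mem_fst/idP => [[y]|xE].
  by rewrite inE => /and3P[].
have [y yF exy] := imsetT_witness (dE x) dFT.
by exists y; rewrite inE xE yF exy /=.
Qed.

Lemma datum_subcat_snd : dE @: E = [set: gT] -> [set p.2 | p in S] = F.
Proof.
move=> dET; apply/setP => y; apply/mem_snd/idP => [[x]|yF].
  by rewrite inE => /and3P[].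
have [x xE exy] := imsetT_witness (dF y) dET.
by exists x; rewrite inE xE yF exy /=.
Qed.

Lemma datum_subcat_same_deg x x' : dF @: F = [set: gT] -> x \in E -> x' \in E ->
  dE x = dE x' <-> exists y, (x, y) \in S /\ (x', y) \in S.
Proof.
move=> dFT xE x'E; split => [exx'|[y []]].
  have [y yF exy] := imsetT_witness (dE x) dFT.
  by exists y; rewrite !inE xE x'E yF -exx' exy eqxx.
by rewrite !inE => /and3P[_ _ /eqP ->] /and3P[_ _ /eqP ->].
Qed.

End SubcategoryOfDatum.

Lemma datum_subcat_inj (I J : finType) (C : fusion_rules I) (D : fusion_rules J)
    (E : {set I}) (F : {set J}) (gT : finGroupType) (dE : I -> gT) (dF : J -> gT)
    (E' : {set I}) (F' : {set J}) (gT' : finGroupType) (dE' : I -> gT') (dF' : J -> gT') :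
    subcat_datum C D E F dE dF -> subcat_datum C D E' F' dE' dF' ->
    datum_subcat E F dE dF = datum_subcat E' F' dE' dF' ->
  datum_equiv E F dE dF E' F' dE' dF'.
Proof.
move=> [subE _ gradE [_ dFT]] [_ _ gradE' [_ dFT']] eqS.
have eqE : E = E'.
  by rewrite -(datum_subcat_fst E dE dFT) eqS datum_subcat_fst.
have eqF : F = F'.
  by rewrite -(datum_subcat_snd F dF gradE.2) eqS datum_subcat_snd ?gradE'.2.
subst E' F'; split=> //; split=> //.
have same_fibres : {in E &, forall x x', dE x = dE x' <-> dE' x = dE' x'}.
  move=> x x' xE x'E; split.
    by move/(datum_subcat_same_deg dE dFT xE x'E); rewrite eqS
       => /(datum_subcat_same_deg dE' dFT' xE x'E).
  by move/(datum_subcat_same_deg dE' dFT' xE x'E); rewrite -eqS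
     => /(datum_subcat_same_deg dE dFT xE x'E).
have [alpha [bij_alpha alphaM alphaE]] := grading_iso subE gradE gradE' same_fibres.
exists alpha; split=> // y yF.
have [x xE exy] := imsetT_witness (dF y) gradE.2.
have : (x, y) \in datum_subcat E F dE dF by rewrite inE xE yF exy eqxx.
by rewrite eqS inE => /and3P[_ _ /eqP <-]; rewrite -exy alphaE.
Qed.

Section DatumOfSubcategory.
Variables (I J : finType) (C : fusion_rules I) (D : fusion_rules J) (S : {set I * J}).
Hypothesis subS : deligne_subcat C D S.
Local Notation NC := (f_N C).
Local Notation ND := (f_N D).
Local Notation E := [set p.1 | p in S].
Local Notation F := [set p.2 | p in S].

Lemma S_unit : (f_one C, f_one D) \in S.
Proof. by case: subS. Qed.

Lemma S_dual x y : (x, y) \in S -> (f_dual C x, f_dual D y) \in S.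
Proof. by case: subS => _ Sd _ /Sd. Qed.

Lemma S_mul x y x' y' z w : (x, y) \in S -> (x', y') \in S ->
  0 < NC x x' z -> 0 < ND y y' w -> (z, w) \in S.
Proof.
by case: subS => _ _ Sm xyS x'y'S xx'z yy'w; apply: (Sm _ _ _ xyS x'y'S); rewrite muln_gt0 xx'z.
Qed.

Lemma fst_fusion_subcat : fusion_subcat C E.
Proof.
split.
- by apply/mem_fst; exists (f_one D); apply: S_unit.
- by move=> x /mem_fst[y xyS]; apply/mem_fst; exists (f_dual D y); apply: S_dual.
- move=> x x' z /mem_fst[y xyS] /mem_fst[y' x'y'S] xx'z.
  have [w yy'w] := f_constituent D y y'.
  by apply/mem_fst; exists w; apply: S_mul xyS x'y'S xx'z yy'w.
Qed.

Lemma snd_fusion_subcat : fusion_subcat D F.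
Proof.
split.
- by apply/mem_snd; exists (f_one C); apply: S_unit.
- by move=> y /mem_snd[x xyS]; apply/mem_snd; exists (f_dual C x); apply: S_dual.
- move=> y y' w /mem_snd[x xyS] /mem_snd[x' x'y'S] yy'w.
  have [z xx'z] := f_constituent C x x'.
  by apply/mem_snd; exists z; apply: S_mul xyS x'y'S xx'z yy'w.
Qed.

Definition fibre x : {set J} := [set y | (x, y) \in S].

Lemma fibre_mul u x z : u \in E -> 0 < NC u x z ->
  fusion_prod D (fibre u) (fibre x) = fibre z.
Proof.
move=> /mem_fst[y0 uy0S] uxz; apply/setP => w; rewrite !inE.
apply/existsP/idP => [[y /andP[]]|zwS].
  by rewrite inE => uyS /existsP[y' /andP[]]; rewrite inE => xy'S; apply: S_mul uxz.
(* Witness: [y0] over [u], and a constituent [y'] of [y0^* (x) w], which lies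
   over [x] because [x] occurs in [u^* (x) z]. *)
have [y' y0'wy'] := f_constituent D (f_dual D y0) w.
exists y0; rewrite inE uy0S; apply/existsP; exists y'; rewrite inE f_frobl y0'wy' andbT.
by apply: (S_mul (S_dual uy0S) zwS _ y0'wy'); rewrite -f_frobl.
Qed.

Lemma fibre_eq x x' y : (x, y) \in S -> (x', y) \in S -> fibre x = fibre x'.
Proof.
suff fibre_sub a b : (a, y) \in S -> (b, y) \in S -> {subset fibre a <= fibre b}.
  by move=> xyS x'yS; apply/setP => w; apply/idP/idP; apply: fibre_sub.
move=> ayS byS w; rewrite !inE => awS.
(* A constituent [m] of [b (x) a^*] lies over the unit, and [b] occurs in [m (x) a]. *)
have [m [bam mab]] := f_constituent_dual C b (f_dual C a).
have m1S : (m, f_one D) \in S by apply: S_mul byS (S_dual ayS) bam _; rewrite f_N_dual.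
by apply: S_mul m1S awS _ _; rewrite ?f_N_unitl // -(f_dualK C a).
Qed.

Lemma fibre_group_law : group_law_on (fibre @: E) (fusion_prod D) (fibre (f_one C)).
Proof.
have [E1 Ed Em] := fst_fusion_subcat.
split.
- exact: imset_f.
- move=> _ _ /imsetP[u uE ->] /imsetP[x xE ->].
  have [z uxz] := f_constituent C u x.
  by rewrite (fibre_mul uE uxz) imset_f // (Em _ _ _ uE xE uxz).
- move=> _ _ _ /imsetP[u uE ->] /imsetP[x xE ->] /imsetP[x' x'E ->].
  have [v uxv] := f_constituent C u x; have [t vx't] := f_constituent C v x'.
  have [m [xx'm umt]] := f_constituent_reassoc uxv vx't.
  rewrite (fibre_mul uE uxv) (fibre_mul (Em _ _ _ uE xE uxv) vx't).
  by rewrite (fibre_mul xE xx'm) (fibre_mul uE umt).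
- move=> _ /imsetP[x xE ->].
  by rewrite (fibre_mul (z:=x) E1) ?f_N_unitl // (fibre_mul (z:=x) xE) ?f_N_unitr.
- move=> _ /imsetP[x xE ->]; exists (fibre (f_dual C x)); first by rewrite imset_f ?Ed.
  by rewrite (fibre_mul (z:=f_one C) xE) ?f_N_dual.
Qed.

Definition fibre_group : {group {perm {set J}}} :=
  Group (cayley_group_set fibre_group_law).

Definition fibre_deg (X : {set J}) : subg_of fibre_group :=
  subg fibre_group (cayley fibre_group_law X).

Definition fibre_of_snd y := \bigcup_(x | (x, y) \in S) fibre x.

Lemma fibre_of_sndE x y : (x, y) \in S -> fibre_of_snd y = fibre x.
Proof.
move=> xyS; apply/setP => w; apply/bigcupP/idP => [[x' x'yS]|xw]; last by exists x.
by rewrite (fibre_eq x'yS xyS).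
Qed.

Lemma fibre_degM x x' z : x \in E -> x' \in E -> 0 < NC x x' z ->
  fibre_deg (fibre z) = (fibre_deg (fibre x) * fibre_deg (fibre x'))%g.
Proof.
move=> xE x'E xx'z; rewrite /fibre_deg -(fibre_mul xE xx'z) cayleyM ?imset_f //.
by rewrite subgM // !imset_f.
Qed.

Lemma fibre_deg_surj u : exists2 x, x \in E & fibre_deg (fibre x) = u.
Proof.
have /imsetP[_ /imsetP[x xE ->] phix] := subgP u.
by exists x => //; rewrite /fibre_deg -phix sgvalK.
Qed.

Lemma fibre_deg_inj : {in E &, forall x x',
  fibre_deg (fibre x) = fibre_deg (fibre x') -> fibre x = fibre x'}.
Proof.
move=> x x' xE x'E /(congr1 val); rewrite !subgK ?imset_f //.
by apply: cayley_inj; apply: imset_f.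
Qed.

Lemma fst_faithful_grading : faithful_grading C E (fun x => fibre_deg (fibre x)).
Proof.
split; first exact: fibre_degM.
by apply/setP => u; rewrite inE; have [x xE <-] := fibre_deg_surj u; apply: imset_f.
Qed.

Lemma snd_faithful_grading : faithful_grading D F (fun y => fibre_deg (fibre_of_snd y)).
Proof.
split.
  move=> y y' w /mem_snd[x xyS] /mem_snd[x' x'y'S] yy'w.
  have [z xx'z] := f_constituent C x x'.
  rewrite (fibre_of_sndE xyS) (fibre_of_sndE x'y'S).
  rewrite (fibre_of_sndE (S_mul xyS x'y'S xx'z yy'w)).
  by apply: fibre_degM xx'z; apply/mem_fst; [exists y | exists y'].
apply/setP => u; rewrite inE; have [x /mem_fst[y xyS] <-] := fibre_deg_surj u.
by rewrite -(fibre_of_sndE xyS); apply: imset_f; apply/mem_snd; exists x.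
Qed.

Lemma S_eq_datum_subcat :
  S = datum_subcat E F (fun x => fibre_deg (fibre x)) (fun y => fibre_deg (fibre_of_snd y)).
Proof.
apply/setP => [[x y]]; rewrite inE /=; apply/idP/and3P => [xyS|[xE yF /eqP]].
  rewrite (fibre_of_sndE xyS) eqxx.
  by split=> //; [apply/mem_fst; exists y | apply/mem_snd; exists x].
have [x' x'yS] := mem_snd _ _ yF.
have x'E : x' \in E by apply/mem_fst; exists y.
rewrite (fibre_of_sndE x'yS) => /(fibre_deg_inj xE x'E) eq_fibre.
have : y \in fibre x' by rewrite inE.
by rewrite -eq_fibre inE.
Qed.

Lemma deligne_subcat_datum :
  exists (gT : finGroupType) (E : {set I}) (F : {set J}) (dE : I -> gT) (dF : J -> gT),
    subcat_datum C D E F dE dF /\ S = datum_subcat E F dE dF.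
Proof.
exists (subg_of fibre_group), E, F, (fun x => fibre_deg (fibre x)),
  (fun y => fibre_deg (fibre_of_snd y)).
split; last exact: S_eq_datum_subcat.
split; [exact: fst_fusion_subcat | exact: snd_fusion_subcat |
        exact: fst_faithful_grading | exact: snd_faithful_grading].
Qed.

End DatumOfSubcategory.

Theorem theorem2p2 (I J : finType) (C : fusion_rules I) (D : fusion_rules J) :
  (* well defined: S(E,F,G) is a fusion subcategory of C \boxtimes D *)
  (forall (E : {set I}) (F : {set J}) (gT : finGroupType) (dE : I -> gT) (dF : J -> gT),
      subcat_datum C D E F dE dF -> deligne_subcat C D (datum_subcat E F dE dF)) /\
  (* surjective *)
  (forall S : {set I * J}, deligne_subcat C D S ->
      exists (gT : finGroupType) (E : {set I}) (F : {set J}) (dE : I -> gT) (dF : J -> gT),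
        subcat_datum C D E F dE dF /\ S = datum_subcat E F dE dF) /\
  (* injective up to identification of data *)
  (forall (E : {set I}) (F : {set J}) (gT : finGroupType) (dE : I -> gT) (dF : J -> gT)
          (E' : {set I}) (F' : {set J}) (gT' : finGroupType) (dE' : I -> gT') (dF' : J -> gT'),
      subcat_datum C D E F dE dF -> subcat_datum C D E' F' dE' dF' ->
      datum_subcat E F dE dF = datum_subcat E' F' dE' dF' ->
      datum_equiv E F dE dF E' F' dE' dF').
Proof.
split; first exact: datum_subcat_fusion.
split; first exact: deligne_subcat_datum.
exact: datum_subcat_inj.
Qed.
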